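(* Let $p$ be an odd prime and let $n,s$ be positive integers such that $2n/s\geq 3$ is an odd integer; put $q=p^n$, $d=p^s$, and $f(X)=X^{d+1}\in\mathbb{F}_{q^2}[X]$. Then the graph $\mathcal{A}_{q^2,d}$ is isomorphic to the subgraph of $G_f$ induced by the vertex set $\mathbb{F}_{q^2}\times\mathbb{F}_{q^2}$ (the points $(x,y)$ of $\Pi_f$).
   Context: The map $x\mapsto x^d+x$ is a bijection of $\mathbb{F}_{q^2}$. The graph $\mathcal{A}_{q^2,d}$ has vertex set $\mathbb{F}_{q^2}\times\mathbb{F}_{q^2}$; writing vertices as $(a^d+a,x)$ and $(b^d+b,y)$ with $a,b,x,y\in\mathbb{F}_{q^2}$ (uniquely), two distinct vertices are adjacent iff $a^db+ab^d=x+y$. The graph $G_f$ is the orthogonal polarity graph of the plane $\Pi_f$ over $\mathbb{F}_{q^2}$; on its vertices of the form $(x,y)$ with $x,y\in\mathbb{F}_{q^2}$, two distinct vertices $(x_1,y_1)$ and $(x_2,y_2)$ are adjacent iff $f(x_1+x_2)=y_1+y_2$. *)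

From HB Require Import structures.
From mathcomp Require Import all_boot all_order all_algebra all_field.
Set Implicit Arguments. Unset Strict Implicit. Unset Printing Implicit Defensive.
Import GRing.Theory.
Local Open Scope ring_scope.

(* Adjacency in the graph A_{q^2,d} on vertex set F x F:
   writing u = (a^d + a, x), v = (b^d + b, y) (unique since x |-> x^d + x is
   a bijection of F), distinct u, v are adjacent iff a^d b + a b^d = x + y. *)
Definition adjA (F : finFieldType) (d : nat) (u v : F * F) : Prop :=
  u <> v /\
  exists a b : F, u.1 = a ^+ d + a /\ v.1 = b ^+ d + b /\
                  a ^+ d * b + a * b ^+ d = u.2 + v.2.

Definition adjG (F : finFieldType) (f : {poly F}) (u v : F * F) : Prop :=
  u <> v /\ f.[u.1 + v.1] = u.2 + v.2.

Definition graph_iso (V W : Type) (e1 : V -> V -> Prop) (e2 : W -> W -> Prop)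
  : Prop :=
  exists g : V -> W, bijective g /\ forall u v, e1 u v <-> e2 (g u) (g v).

From HB Require Import structures.
From mathcomp Require Import all_boot all_order all_algebra all_field.
From mathcomp Require Import ring.

Set Implicit Arguments.
Unset Strict Implicit.
Unset Printing Implicit Defensive.
Import GRing.Theory.
Local Open Scope ring_scope.

(* As d = p^s, x |-> x^d is additive, so
   (a + b)^(d+1) = a^d b + a b^d + a^(d+1) + b^(d+1); hence the change of
   coordinates (a^d + a, y) |-> (a, y + a^(d+1)) turns the adjacency
   a^d b + a b^d = y1 + y2 of A_{q^2,d} into the adjacency of G_f.  It is a
   bijection because a |-> a^d + a is injective: a kernel element satisfies
   a^d = -a, hence a = a^(q^2) = a^(d^m) = (-1)^m a = -a for the odd m = 2n/s,
   and a = 0 in odd characteristic. *)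

Definition twist {R : nzRingType} (d : nat) (a : R) : R := a ^+ d + a.

Section TwistedCoordinates.

Variables (F : finFieldType) (d : nat).
Hypothesis exprD_d : forall x y : F, (x + y) ^+ d = x ^+ d + y ^+ d.
Hypothesis twist_inj : injective (twist (R := F) d).

Lemma exprSD_additive (a b : F) :
  (a + b) ^+ d.+1 = a ^+ d * b + a * b ^+ d + a ^+ d.+1 + b ^+ d.+1.
Proof. by rewrite !exprS exprD_d; ring. Qed.

Definition twist_coord (u : F * F) : F * F :=
  (invF twist_inj u.1, u.2 + invF twist_inj u.1 ^+ d.+1).

Definition untwist_coord (w : F * F) : F * F :=
  (twist d w.1, w.2 - w.1 ^+ d.+1).

Lemma twist_coordK : cancel twist_coord untwist_coord.
Proof. by case=> x y; rewrite /twist_coord /untwist_coord /= f_invF addrK. Qed.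

Lemma untwist_coordK : cancel untwist_coord twist_coord.
Proof.
by case=> a y; rewrite /twist_coord /untwist_coord /= invF_f subrK.
Qed.

Lemma adjA_twist_coord (u v : F * F) :
  adjA d u v <-> adjG ('X ^+ d.+1) (twist_coord u) (twist_coord v).
Proof.
rewrite /adjA /adjG hornerXn.
split=> [[u_neq_v [a [b [u1 [v1 adj_ab]]]]] | [twist_neq adj]]; split.
- by move/(can_inj twist_coordK).
- by rewrite /twist_coord /= u1 v1 !invF_f exprSD_additive adj_ab; ring.
- by move=> u_eq_v; apply: twist_neq; rewrite u_eq_v.
- set a := invF twist_inj u.1; set b := invF twist_inj v.1.
  exists a, b; do 2!(split; first by rewrite -[LHS](f_invF twist_inj)).
  move: adj; rewrite /twist_coord /= -/a -/b exprSD_additive => adj.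
  by apply: (addIr (a ^+ d.+1 + b ^+ d.+1)); rewrite !addrA adj; ring.
Qed.

Lemma graph_iso_adjA_adjG :
  graph_iso (adjA (F := F) d) (adjG ('X ^+ d.+1 : {poly F})).
Proof.
exists twist_coord; split; last exact: adjA_twist_coord.
by exists untwist_coord; [exact: twist_coordK | exact: untwist_coordK].
Qed.

End TwistedCoordinates.

Section FrobeniusTwist.

Variables (F : finFieldType) (p s m : nat).
Hypotheses (charFp : p \in [pchar F]) (p_odd : odd p) (m_odd : odd m).
Hypothesis cardF : #|F| = ((p ^ s) ^ m)%N.

Let d := (p ^ s)%N.

Lemma pchar_nat_pow : [pchar F].-nat d.
Proof. by rewrite pnatX (pnatE _ (pcharf_prime charFp)) charFp. Qed.

Lemma exprD_pchar_pow (x y : F) : (x + y) ^+ d = x ^+ d + y ^+ d.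
Proof. exact: exprDn_pchar pchar_nat_pow. Qed.

Lemma oppr_id_eq0 (a : F) : a = - a -> a = 0.
Proof.
move/eqP; rewrite -addr_eq0 -mulr2n -mulr_natl mulf_eq0 => /orP[|/eqP //].
rewrite -(dvdn_pcharf charFp) => /(dvdn_leq (ltn0Sn 1)).
have := prime_gt1 (pcharf_prime charFp).
by case: p p_odd => [|[|[]]].
Qed.

Lemma exprN_pchar_pow (x : F) : (- x) ^+ d = - x ^+ d.
Proof. exact: exprNn_pchar pchar_nat_pow. Qed.

Lemma twistB_pchar_pow (x y : F) : twist d (x - y) = twist d x - twist d y.
Proof. by rewrite /twist exprD_pchar_pow exprN_pchar_pow opprD addrACA. Qed.

Lemma expr_pchar_pow_eqN_eq0 (a : F) : a ^+ d = - a -> a = 0.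
Proof.
move=> a_d; apply: oppr_id_eq0.
have a_even k : a ^+ (d ^ k.*2) = a.
  elim: k => [|k IHk]; first by rewrite expn0 expr1.
  by rewrite doubleS !expnSr !exprM IHk a_d exprN_pchar_pow a_d opprK.
rewrite -[LHS]expf_card cardF -[m]odd_double_half m_odd expnS mulnC exprM.
by rewrite a_even a_d.
Qed.

Lemma twist_pchar_pow_inj : injective (twist (R := F) d).
Proof.
move=> x y /eqP; rewrite -subr_eq0 -twistB_pchar_pow => /eqP twist_xy.
apply/eqP; rewrite -subr_eq0; apply/eqP/expr_pchar_pow_eqN_eq0.
by apply/eqP; rewrite -addr_eq0 -[_ + _]/(twist d _) twist_xy.
Qed.

Lemma graph_iso_adjA_adjG_pchar :
  graph_iso (adjA (F := F) d) (adjG ('X ^+ d.+1 : {poly F})).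
Proof. exact: graph_iso_adjA_adjG exprD_pchar_pow twist_pchar_pow_inj. Qed.

End FrobeniusTwist.

Theorem lemma6 (p n s : nat) (F : finFieldType) :
  prime p -> odd p -> (0 < n)%N -> (0 < s)%N ->
  (s %| 2 * n)%N -> odd (2 * n %/ s) -> (3 <= 2 * n %/ s)%N ->
  #|F| = ((p ^ n) ^ 2)%N ->
  graph_iso (adjA (F := F) (p ^ s)%N)
            (adjG ('X ^+ (p ^ s).+1 : {poly F})).
Proof.
move=> p_prime p_odd _ _ s_dvd_2n m_odd _ cardF.
have charFp : p \in [pchar F].
  by apply: (card_finPcharP (n := (n * 2)%N)); rewrite ?expnM.
apply: (graph_iso_adjA_adjG_pchar charFp p_odd m_odd).
by rewrite -expnM mulnC divnK // cardF -expnM mulnC.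
Qed.
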